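(* Consider the relative dynamics and constraint described in the context, with initial location $\mathbf{x}_0=(x_0,y_0)$, $\|\mathbf{x}_0\|>1$, $y_0\ge0$, and let $$\theta_{\tan}=\cos^{-1}\Big(\tfrac{1}{\|\mathbf{x}_0\|}\Big)+\operatorname{atan}(y_0,x_0).$$ For a target location on the Proximity Circle at angle $\theta\ge\theta_{\tan}$, the optimal (minimum-time, constraint-respecting) Evader trajectory from $\mathbf{x}_0$ to $(\cos\theta,\sin\theta)$ is to follow a straight-line trajectory to the point $(\cos\theta_{\tan},\sin\theta_{\tan})$ (the tangent point of the Proximity Circle as seen from $\mathbf{x}_0$) and then proceed along the Proximity Circle from $\theta_{\tan}$ to $\theta$.
   Context: Pursuer-fixed frame: the Evader's relative position $\mathbf{x}(t)=(x(t),y(t))\in\mathbb{R}^2$ evolves as $\dot x=\mu\cos\psi(t)-1$, $\dot y=\mu\sin\psi(t)$, $\mathbf{x}(0)=\mathbf{x}_0$, where $\mu\in(0,1)$ and $\psi(t)$ is the Evader's heading. The Proximity Circle is $\|\mathbf{x}\|=1$ and trajectories must satisfy $\|\mathbf{x}(t)\|\ge1$. A location at angle $\theta$ on the Proximity Circle means the point $(\cos\theta,\sin\theta)$. $\operatorname{atan}(a,b)$ is the two-argument arctangent (polar angle of $(b,a)$). The paper assumes throughout that $y\ge 0$. *)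

From Stdlib Require Import Reals.
From Coquelicot Require Import Coquelicot.
Open Scope R_scope.

(* Two-argument arctangent: atan2 a b = polar angle of (b, a), in (-PI, PI]. *)
Definition atan2 (a b : R) : R :=
  if Rlt_dec 0 b then atan (a / b)
  else if Rlt_dec b 0 then
         (if Rle_dec 0 a then atan (a / b) + PI else atan (a / b) - PI)
  else if Rlt_dec 0 a then PI / 2
  else if Rlt_dec a 0 then - (PI / 2)
  else 0.

Definition rnorm (x y : R) : R := sqrt (x ^ 2 + y ^ 2).

Definition theta_tan (x0 y0 : R) : R := acos (1 / rnorm x0 y0) + atan2 y0 x0.

(* Relative trajectory generated by the heading psi (integral / Caratheodory
   form of  x' = mu cos psi - 1,  y' = mu sin psi,  x(0) = (x0, y0)). *)
Definition traj_x (mu x0 : R) (psi : R -> R) (t : R) : R :=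
  x0 + RInt (fun s => mu * cos (psi s) - 1) 0 t.
Definition traj_y (mu y0 : R) (psi : R -> R) (t : R) : R :=
  y0 + RInt (fun s => mu * sin (psi s)) 0 t.

Definition admissible (mu x0 y0 : R) (psi : R -> R) (T : R) : Prop :=
  0 <= T /\
  ex_RInt (fun s => mu * cos (psi s) - 1) 0 T /\
  ex_RInt (fun s => mu * sin (psi s)) 0 T /\
  (forall t, 0 <= t <= T ->
     1 <= rnorm (traj_x mu x0 psi t) (traj_y mu y0 psi t)).

Definition reaches (mu x0 y0 : R) (psi : R -> R) (T theta : R) : Prop :=
  traj_x mu x0 psi T = cos theta /\ traj_y mu y0 psi T = sin theta.

Definition tangent_then_arc (mu x0 y0 : R) (psi : R -> R) (T th_t theta : R) : Prop :=
  exists t1, 0 <= t1 <= T /\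
    (forall t, 0 <= t <= t1 -> exists s, 0 <= s <= 1 /\
        traj_x mu x0 psi t = x0 + s * (cos th_t - x0) /\
        traj_y mu y0 psi t = y0 + s * (sin th_t - y0)) /\
    traj_x mu x0 psi t1 = cos th_t /\ traj_y mu y0 psi t1 = sin th_t /\
    exists phi : R -> R,
      phi t1 = th_t /\ phi T = theta /\
      (forall t u, t1 <= t -> t <= u -> u <= T -> phi t <= phi u) /\
      (forall t, t1 <= t <= T ->
         traj_x mu x0 psi t = cos (phi t) /\ traj_y mu y0 psi t = sin (phi t)).

(* In the Pursuer's frame the Evader's velocity ranges over the disk of radius mu centred at
   (-1, 0), so on any time interval of length tau its displacement lies in the disk of radius
   mu tau centred at (-tau, 0). Hence x decreases, and a competing trajectory crosses each vertical
   line x = cos p, for p between the tangent angle a and the target angle b, exactly once and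
   above the circle.

   In the direction (- sin p, cos p) tangent to the circle at angle p, the largest available
   speed is v p = sin p + sqrt (mu^2 - cos^2 p). Running the tangent segment of length L at speed
   v a and then the circle at speed v takes L / v a + int_a^b dp / v p, and this is optimal:
   cutting [a, b] into N equal arcs, the supporting half-plane of the reach disk at its farthest
   point in the direction of a chord shows that passing from one crossing to the next costs at
   least the chord length over v at the midpoint, up to a change of height above the circle
   weighted by cos p / sqrt (mu^2 - cos^2 p). These weights decrease along the arc and the heights
   are nonnegative, so the corrections telescope away, and the sums of the chord times tend to
   the integral as N grows. *)

From Stdlib Require Import Reals Lra Lia Psatz.
From Coquelicot Require Import Coquelicot.
Open Scope R_scope.

Lemma le_sqrt_of_sqr_le a b : 0 <= b -> a * a <= b -> a <= sqrt b.
Proof.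
  intros Hb Hab. destruct (Rle_dec a 0) as [Ha | Ha].
  - pose proof (sqrt_pos b); lra.
  - rewrite <- (sqrt_square a) by lra. apply sqrt_le_1; nra.
Qed.

Lemma dot_le_mul_norm A B f g r : 0 <= r -> f * f + g * g <= r * r ->
  A * f + B * g <= r * sqrt (A * A + B * B).
Proof.
  intros Hr Hfg.
  assert (HAB : 0 <= A * A + B * B) by nra.
  rewrite <- (sqrt_square r) by lra. rewrite <- sqrt_mult by nra.
  apply le_sqrt_of_sqr_le; [nra |].
  assert (0 <= (A * g - B * f) ^ 2) by apply pow2_ge_0.
  nra.
Qed.

Lemma ratio_sqrt_le mu c c' : -mu < c' -> c' <= c -> c < mu ->
  c' / sqrt (mu ^ 2 - c' ^ 2) <= c / sqrt (mu ^ 2 - c ^ 2).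
Proof.
  intros H1 H2 H3.
  set (w := sqrt (mu ^ 2 - c ^ 2)). set (w' := sqrt (mu ^ 2 - c' ^ 2)).
  assert (Hw : w * w = mu * mu - c * c) by (unfold w; rewrite sqrt_sqrt; nra).
  assert (Hw' : w' * w' = mu * mu - c' * c') by (unfold w'; rewrite sqrt_sqrt; nra).
  assert (Hw0 : 0 < w) by (apply sqrt_lt_R0; nra).
  assert (Hw0' : 0 < w') by (apply sqrt_lt_R0; nra).
  assert (Hcross : c' * w <= c * w').
  { destruct (Rle_dec 0 c') as [Hc' | Hc'].
    - apply Rsqr_incr_0_var; [unfold Rsqr | nra].
      transitivity (c' * c' * (w * w)); [right; ring |].
      transitivity (c * c * (w' * w')); [| right; ring]. rewrite Hw, Hw'.
      assert (c' * c' <= c * c) by nra. nra.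
    - destruct (Rle_dec 0 c) as [Hc | Hc]; [nra |].
      assert (- c * w' <= - c' * w); [| lra].
      apply Rsqr_incr_0_var; [unfold Rsqr | nra].
      transitivity (c * c * (w' * w')); [right; ring |].
      transitivity (c' * c' * (w * w)); [| right; ring]. rewrite Hw, Hw'.
      assert (c * c <= c' * c') by nra. nra. }
  unfold Rdiv. apply Rmult_le_reg_r with (w * w'); [nra |].
  field_simplify; lra.
Qed.

Lemma two_sin_half_ge d : 0 <= d <= 2 -> d - d ^ 3 / 24 <= 2 * sin (d / 2).
Proof.
  intros Hd. pose proof PI2_3_2. pose proof PI_4.
  destruct (sin_bound (d / 2) 0 ltac:(lra) ltac:(lra)) as [Hs _].
  unfold sin_approx, sin_term in Hs. simpl in Hs. lra.
Qed.

Lemma support_bound_div l v w c e tau : 0 < v -> 0 < w ->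
  l * w + v * c * e <= tau * (v * w) -> l / v + c / w * e <= tau.
Proof.
  intros Hv Hw H. apply Rmult_le_reg_r with (v * w); [nra |].
  replace ((l / v + c / w * e) * (v * w)) with (l * w + v * c * e) by (field; lra). exact H.
Qed.

Definition unit_angle (c s : R) : R := if Rle_dec 0 s then acos c else - acos c.

Lemma unit_angle_spec c s : c * c + s * s = 1 ->
  cos (unit_angle c s) = c /\ sin (unit_angle c s) = s.
Proof.
  intros Hcs. assert (Hc : -1 <= c <= 1) by nra.
  assert (Hsin : sin (acos c) = Rabs s).
  { rewrite sin_acos by exact Hc. apply sqrt_lem_1; [unfold Rsqr; nra | apply Rabs_pos |].
    unfold Rsqr. rewrite <- Rabs_mult, Rabs_pos_eq by nra. lra. }
  unfold unit_angle. destruct (Rle_dec 0 s) as [Hs | Hs].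
  - rewrite cos_acos, Hsin, Rabs_pos_eq by lra. split; reflexivity.
  - rewrite cos_neg, sin_neg, cos_acos, Hsin, Rabs_left by lra. split; [reflexivity | ring].
Qed.

Lemma fine_subdivision len rho : 0 < len -> 0 < rho -> exists N, (0 < N)%nat /\ len / INR N <= rho.
Proof.
  intros Hlen Hrho.
  destruct (archimed_cor1 (rho / len)) as [N [HN HN0]]; [apply Rdiv_lt_0_compat; lra |].
  exists N. split; [exact HN0 |].
  apply Rlt_le, Rmult_lt_reg_r with (/ len); [apply Rinv_0_lt_compat; lra |].
  replace (len / INR N * / len) with (/ INR N) by (field; split; [lra | apply not_0_INR; lia]).
  exact HN.
Qed.

(* Coquelicot states these for an arbitrary normed module, which unification cannot infer from
   real-valued integrands. *)
Lemma ex_RInt_Chasles_1_R (f : R -> R) a b c :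
  a <= b <= c -> ex_RInt f a c -> ex_RInt f a b.
Proof. exact (ex_RInt_Chasles_1 (V := R_CompleteNormedModule) f a b c). Qed.

Lemma ex_RInt_Chasles_2_R (f : R -> R) a b c :
  a <= b <= c -> ex_RInt f a c -> ex_RInt f b c.
Proof. exact (ex_RInt_Chasles_2 (V := R_CompleteNormedModule) f a b c). Qed.

Lemma ex_RInt_Chasles_R (f : R -> R) a b c :
  ex_RInt f a b -> ex_RInt f b c -> ex_RInt f a c.
Proof. exact (ex_RInt_Chasles (V := R_NormedModule) f a b c). Qed.

Lemma ex_RInt_plus_R (f g : R -> R) a b :
  ex_RInt f a b -> ex_RInt g a b -> ex_RInt (fun x => f x + g x) a b.
Proof. exact (ex_RInt_plus (V := R_NormedModule) f g a b). Qed.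

Lemma ex_RInt_scal_R (f : R -> R) a b k :
  ex_RInt f a b -> ex_RInt (fun x => k * f x) a b.
Proof. exact (ex_RInt_scal (V := R_NormedModule) f a b k). Qed.

Lemma ex_RInt_const_R a b (c : R) : ex_RInt (fun _ => c) a b.
Proof. exact (ex_RInt_const (V := R_NormedModule) a b c). Qed.

Lemma RInt_const_R a b (c : R) : RInt (fun _ => c) a b = (b - a) * c.
Proof. exact (RInt_const (V := R_CompleteNormedModule) a b c). Qed.

Lemma ex_RInt_continuous_R (f : R -> R) a b :
  (forall z, Rmin a b <= z <= Rmax a b -> continuous f z) -> ex_RInt f a b.
Proof. exact (ex_RInt_continuous (V := R_CompleteNormedModule) f a b). Qed.

Lemma ex_RInt_ext_R (f g : R -> R) a b :
  (forall x, Rmin a b < x < Rmax a b -> f x = g x) -> ex_RInt f a b -> ex_RInt g a b.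
Proof. exact (ex_RInt_ext (V := R_NormedModule) f g a b). Qed.

Lemma RInt_ext_R (f g : R -> R) a b :
  (forall x, Rmin a b < x < Rmax a b -> f x = g x) -> RInt f a b = RInt g a b.
Proof. exact (RInt_ext (V := R_CompleteNormedModule) f g a b). Qed.

Lemma RInt_plus_R (f g : R -> R) a b :
  ex_RInt f a b -> ex_RInt g a b ->
  RInt (fun x => f x + g x) a b = RInt f a b + RInt g a b.
Proof. exact (RInt_plus (V := R_CompleteNormedModule) f g a b). Qed.

Lemma RInt_scal_R (f : R -> R) a b k :
  ex_RInt f a b -> RInt (fun x => k * f x) a b = k * RInt f a b.
Proof. exact (RInt_scal (V := R_CompleteNormedModule) f a b k). Qed.

Lemma RInt_Chasles_R (f : R -> R) a b c :
  ex_RInt f a b -> ex_RInt f b c -> RInt f a b + RInt f b c = RInt f a c.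
Proof. exact (RInt_Chasles (V := R_CompleteNormedModule) f a b c). Qed.

Lemma RInt_Chasles_le_R (f : R -> R) a b c :
  a <= b <= c -> ex_RInt f a c -> RInt f a c = RInt f a b + RInt f b c.
Proof.
  intros Hb Hf. rewrite RInt_Chasles_R; [reflexivity | |].
  - exact (ex_RInt_Chasles_1_R f a b c Hb Hf).
  - exact (ex_RInt_Chasles_2_R f a b c Hb Hf).
Qed.

Lemma is_RInt_derive_R (f df : R -> R) a b :
  (forall x, Rmin a b <= x <= Rmax a b -> is_derive f x (df x)) ->
  (forall x, Rmin a b <= x <= Rmax a b -> continuous df x) ->
  is_RInt df a b (f b - f a).
Proof. exact (is_RInt_derive (V := R_CompleteNormedModule) f df a b). Qed.

Lemma is_RInt_unique_R (f : R -> R) a b l : is_RInt f a b l -> RInt f a b = l.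
Proof. exact (is_RInt_unique (V := R_CompleteNormedModule) f a b l). Qed.

Lemma RInt_increment_R (f : R -> R) a t u b : a <= t <= u -> u <= b -> ex_RInt f a b ->
  RInt f a u - RInt f a t = RInt f t u.
Proof.
  intros Htu Hub Hf.
  assert (Hu : ex_RInt f a u) by (apply (ex_RInt_Chasles_1_R f a u b); [lra | exact Hf]).
  rewrite (RInt_Chasles_le_R f a t u) by (lra || exact Hu). ring.
Qed.

Lemma RInt_pair_sqr_le (f g : R -> R) t u r : t <= u -> 0 <= r ->
  ex_RInt f t u -> ex_RInt g t u ->
  (forall s, t < s < u -> f s * f s + g s * g s <= r * r) ->
  RInt f t u ^ 2 + RInt g t u ^ 2 <= (r * (u - t)) ^ 2.
Proof.
  intros Htu Hr Hf Hg Hfg.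
  set (A := RInt f t u). set (B := RInt g t u). set (S := sqrt (A * A + B * B)).
  assert (HS : S * S = A * A + B * B) by (apply sqrt_sqrt; nra).
  assert (HS0 : 0 <= S) by apply sqrt_pos.
  assert (HAB : A * A + B * B = RInt (fun s => A * f s + B * g s) t u).
  { rewrite RInt_plus_R by (apply ex_RInt_scal_R; assumption).
    rewrite !RInt_scal_R by assumption. reflexivity. }
  assert (Hle : S * S <= (u - t) * (r * S)).
  { rewrite HS, HAB, <- RInt_const_R.
    apply RInt_le; [lra | | apply ex_RInt_const_R |].
    - apply ex_RInt_plus_R; apply ex_RInt_scal_R; assumption.
    - intros s Hs. apply dot_le_mul_norm; [exact Hr | apply Hfg; exact Hs]. }
  assert (S <= r * (u - t)).
  { destruct (Req_dec S 0) as [-> | HS1]; [nra |].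
    apply Rmult_le_reg_l with S; nra. }
  nra.
Qed.

Lemma is_derive_shift (g : R -> R) c u l :
  is_derive g (u - c) l -> is_derive (fun x => g (x - c)) u l.
Proof.
  intros Hg.
  assert (Hs : is_derive (fun x : R => x - c) u 1) by (auto_derive; [exact I | ring]).
  pose proof (is_derive_comp g (fun x => x - c) u l 1 Hg Hs) as H.
  assert (E : scal (V := R_NormedModule) 1 l = l) by (change (1 * l = l); ring).
  rewrite E in H. exact H.
Qed.

Lemma is_derive_cos_comp (g : R -> R) u l :
  is_derive g u l -> is_derive (fun x => cos (g x)) u (- (l * sin (g u))).
Proof.
  intros Hg. pose proof (is_derive_comp cos g u (- sin (g u)) l (is_derive_cos (g u)) Hg) as H.
  assert (E : scal (V := R_NormedModule) l (- sin (g u)) = - (l * sin (g u)))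
    by (change (l * - sin (g u) = - (l * sin (g u))); ring).
  rewrite E in H. exact H.
Qed.

Lemma is_derive_sin_comp (g : R -> R) u l :
  is_derive g u l -> is_derive (fun x => sin (g x)) u (l * cos (g u)).
Proof.
  intros Hg. exact (is_derive_comp sin g u (cos (g u)) l (is_derive_sin (g u)) Hg).
Qed.

Lemma RInt_derive_ext (f df g : R -> R) a b : a <= b ->
  (forall x, is_derive f x (df x)) -> (forall x, continuous df x) ->
  (forall x, a < x < b -> df x = g x) -> ex_RInt g a b /\ f b - f a = RInt g a b.
Proof.
  intros Hab Hf Hdf Hg.
  assert (Hext : forall x, Rmin a b < x < Rmax a b -> df x = g x)
    by (intros x; rewrite Rmin_left, Rmax_right by lra; apply Hg).
  pose proof (is_RInt_derive_R f df a b (fun x _ => Hf x) (fun x _ => Hdf x)) as HI.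
  split.
  - apply (ex_RInt_ext_R df g a b Hext). exists (f b - f a). exact HI.
  - rewrite <- (RInt_ext_R df g a b Hext). symmetry. apply is_RInt_unique_R, HI.
Qed.

(** * Lipschitz functions *)

Definition clamp (lo hi t : R) : R := Rmin hi (Rmax lo t).

Lemma clamp_in lo hi t : lo <= hi -> lo <= clamp lo hi t <= hi.
Proof. intros; unfold clamp, Rmin, Rmax; repeat destruct Rle_dec; lra. Qed.

Lemma clamp_id lo hi t : lo <= t <= hi -> clamp lo hi t = t.
Proof. intros; unfold clamp, Rmin, Rmax; repeat destruct Rle_dec; lra. Qed.

Lemma clamp_lipschitz lo hi s t : lo <= hi ->
  Rabs (clamp lo hi s - clamp lo hi t) <= Rabs (s - t).
Proof.
  intros; unfold clamp, Rmin, Rmax; repeat destruct Rle_dec;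
    unfold Rabs; repeat destruct Rcase_abs; lra.
Qed.

Lemma lipschitz_continuous (f : R -> R) K :
  (forall s t, Rabs (f s - f t) <= K * Rabs (s - t)) -> forall x, continuous f x.
Proof.
  intros Hf x. apply continuity_pt_filterlim.
  intros eps Heps.
  assert (HK : 0 < Rabs K + 1) by (pose proof (Rabs_pos K); lra).
  exists (eps / (Rabs K + 1)). split; [apply Rdiv_lt_0_compat; lra |].
  intros y [_ Hy]. simpl in *. unfold R_dist in *.
  eapply Rle_lt_trans; [apply Hf |].
  apply Rle_lt_trans with ((Rabs K + 1) * Rabs (y - x)).
  - apply Rmult_le_compat_r; [apply Rabs_pos | pose proof (RRle_abs K); lra].
  - apply Rmult_lt_reg_l with (/ (Rabs K + 1)); [apply Rinv_0_lt_compat; lra |].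
    rewrite <- Rmult_assoc, Rinv_l, Rmult_1_l by lra.
    unfold Rdiv in Hy. lra.
Qed.

Lemma IVT_lipschitz_on (f : R -> R) K a b c : a <= b ->
  (forall s t, a <= s <= b -> a <= t <= b -> Rabs (f s - f t) <= K * Rabs (s - t)) ->
  Rmin (f a) (f b) <= c <= Rmax (f a) (f b) ->
  exists t, a <= t <= b /\ f t = c.
Proof.
  intros Hab Hf Hc.
  set (g := fun t => f (clamp a b t)).
  assert (HK : 0 <= Rabs K) by apply Rabs_pos.
  assert (Hg : continuity g).
  { intros x. apply continuity_pt_filterlim.
    apply (lipschitz_continuous g (Rabs K)). intros s t. unfold g.
    eapply Rle_trans; [apply Hf; apply clamp_in; lra |].
    apply Rle_trans with (Rabs K * Rabs (clamp a b s - clamp a b t)).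
    - apply Rmult_le_compat_r; [apply Rabs_pos | apply RRle_abs].
    - apply Rmult_le_compat_l; [lra | apply clamp_lipschitz; lra]. }
  assert (Hga : g a = f a) by (unfold g; rewrite clamp_id; lra).
  assert (Hgb : g b = f b) by (unfold g; rewrite clamp_id; lra).
  destruct (IVT_gen g a b c Hg) as [t [Ht Hgt]]; [rewrite Hga, Hgb; exact Hc |].
  rewrite Rmin_left, Rmax_right in Ht by lra.
  exists t. split; [exact Ht |]. unfold g in Hgt. rewrite clamp_id in Hgt; lra.
Qed.

(** * The reach disk *)

Definition in_reach_disk (mu tau dx dy : R) : Prop :=
  (dx + tau) ^ 2 + dy ^ 2 <= (mu * tau) ^ 2.

Lemma in_reach_disk_x mu tau dx dy : 0 <= mu -> 0 <= tau -> in_reach_disk mu tau dx dy ->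
  -(1 + mu) * tau <= dx <= -(1 - mu) * tau.
Proof.
  unfold in_reach_disk. intros Hmu Htau Hreach.
  assert (0 <= mu * tau) by nra.
  split; nra.
Qed.

Lemma in_reach_disk_y mu tau dx dy : 0 <= mu -> 0 <= tau -> in_reach_disk mu tau dx dy ->
  - (mu * tau) <= dy <= mu * tau.
Proof.
  unfold in_reach_disk. intros Hmu Htau Hreach.
  assert (0 <= mu * tau) by nra.
  assert (dy * dy <= (mu * tau) * (mu * tau)) by (pose proof (pow2_ge_0 (dx + tau)); nra).
  split; nra.
Qed.

Lemma in_reach_disk_slope mu tau dx dy : 0 <= mu <= 1 -> in_reach_disk mu tau dx dy ->
  (1 - mu * mu) * (dy * dy) <= mu * mu * (dx * dx).
Proof.
  unfold in_reach_disk. intros Hmu Hreach.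
  assert (0 <= (mu * mu * tau - (dx + tau)) ^ 2) by apply pow2_ge_0.
  assert ((1 - mu * mu) * (dy * dy) <= (1 - mu * mu) * ((mu * tau) ^ 2 - (dx + tau) ^ 2))
    by (apply Rmult_le_compat_l; nra).
  nra.
Qed.

Lemma in_reach_disk_along mu tau s c w l : 0 <= tau -> in_reach_disk mu tau (- (l * s)) (l * c) ->
  s * s + c * c = 1 -> w * w = mu * mu - c * c -> 0 <= w -> 0 < s -> 0 <= l ->
  l <= tau * (s + w).
Proof.
  unfold in_reach_disk. intros Htau Hreach Hsc Hw Hw0 Hs Hl.
  assert (E : (tau - l * s) ^ 2 + (l * c) ^ 2 - (mu * tau) ^ 2
              = ((s + w) * tau - l) * ((s - w) * tau - l)).
  { transitivity ((l * l - tau * tau) * (s * s + c * c - 1)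
                  + tau * tau * (w * w - (mu * mu - c * c))
                  + ((s + w) * tau - l) * ((s - w) * tau - l));
      [| rewrite Hsc, Hw]; ring. }
  destruct (Rle_dec l (tau * (s + w))) as [Hle | Hlt]; [exact Hle |].
  assert ((s + w) * tau - l < 0) by nra.
  assert ((s - w) * tau - l < 0) by nra.
  nra.
Qed.

(* The half-plane bounded by the tangent to the reach disk at its farthest point in the
   direction (-s, c); the normal of that tangent is (1 - (s + w) s, (s + w) c). *)
Lemma in_reach_disk_support mu tau s c w l e : 0 <= mu -> 0 <= tau ->
  in_reach_disk mu tau (- (l * s)) (e + l * c) -> s * s + c * c = 1 -> w * w = mu * mu - c * c ->
  0 <= w -> l * w + (s + w) * c * e <= tau * ((s + w) * w).
Proof.
  unfold in_reach_disk. intros Hmu Htau Hreach Hsc Hw Hw0.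
  set (dx := - (l * s)) in *. set (dy := e + l * c) in *.
  set (p := 1 - (s + w) * s). set (q := (s + w) * c).
  assert (Hpq : p * p + q * q = mu * mu).
  { unfold p, q. replace (mu * mu) with (w * w + c * c) by lra.
    replace 1 with (s * s + c * c) by lra. ring_simplify. nra. }
  assert (Hdot : (dx + tau) * p + dy * q <= mu * (mu * tau)).
  { eapply Rle_trans; [apply (dot_le_mul_norm _ _ p q mu); lra |].
    apply Rmult_le_compat_l; [lra |].
    assert (0 <= mu * tau) by nra.
    rewrite <- (sqrt_square (mu * tau)) by lra.
    apply sqrt_le_1_alt. nra. }
  assert (E : p * dx + q * dy = l * w + q * e).
  { unfold dx, dy, p, q.
    transitivity (l * w + (s + w) * c * e + l * (s + w) * (s * s + c * c - 1)); [ring |].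
    rewrite Hsc. ring. }
  assert (E2 : mu * mu - p = (s + w) * w).
  { unfold p. replace (mu * mu) with (w * w + c * c) by lra. nra. }
  rewrite <- E2. clearbody p q. lra.
Qed.

Lemma in_reach_disk_arrival mu tau dx dy c s : 0 <= mu <= 1 -> 0 <= tau ->
  in_reach_disk mu tau dx dy -> c * c + s * s = 1 ->
  1 <= (c - dx) ^ 2 + (s - dy) ^ 2 -> tau * (- c - mu) <= 5 / 2 * (tau * tau).
Proof.
  intros Hmu Htau Hreach Hcs Hout.
  destruct (in_reach_disk_x mu tau dx dy) as [Hx1 Hx2]; try lra; [exact Hreach |].
  destruct (in_reach_disk_y mu tau dx dy) as [Hy1 Hy2]; try lra; [exact Hreach |].
  unfold in_reach_disk in Hreach.
  assert (Hdot : - (dx + tau) * c + - dy * s <= mu * tau).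
  { rewrite <- (Rmult_1_l (mu * tau)). eapply Rle_trans.
    - apply (dot_le_mul_norm _ _ c s 1); lra.
    - apply Rmult_le_compat_l; [lra |].
      assert (0 <= mu * tau) by nra.
      rewrite <- (sqrt_square (mu * tau)) by lra.
      apply sqrt_le_1_alt. nra. }
  assert (Hdx : - (2 * tau) <= dx <= 0) by nra.
  assert (dx * dx <= 4 * (tau * tau)) by nra.
  assert (Hdy : - tau <= dy <= tau) by nra.
  assert (dy * dy <= tau * tau) by nra.
  nra.
Qed.

(** * Trajectories *)

Lemma traj_start mu x0 y0 psi : traj_x mu x0 psi 0 = x0 /\ traj_y mu y0 psi 0 = y0.
Proof. unfold traj_x, traj_y. rewrite !RInt_point. split; apply Rplus_0_r. Qed.

Section Trajectory.

Variables (mu x0 y0 : R) (psi : R -> R) (T : R).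
Hypothesis Hmu : 0 < mu < 1.
Hypothesis Hadm : admissible mu x0 y0 psi T.

Local Notation X := (traj_x mu x0 psi).
Local Notation Y := (traj_y mu y0 psi).

Lemma horizon_nonneg : 0 <= T.
Proof. apply Hadm. Qed.

Lemma traj_outside t : 0 <= t <= T -> 1 <= X t ^ 2 + Y t ^ 2.
Proof.
  intros Ht. destruct Hadm as [_ [_ [_ Hout]]]. specialize (Hout t Ht).
  unfold rnorm in Hout. rewrite <- sqrt_1 in Hout.
  apply sqrt_le_0 in Hout; nra.
Qed.

Lemma traj_x_increment t u : 0 <= t <= u -> u <= T ->
  ex_RInt (fun s => mu * cos (psi s)) t u /\
  X u - X t + (u - t) = RInt (fun s => mu * cos (psi s)) t u.
Proof.
  intros Htu HuT. destruct Hadm as [_ [Hx _]].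
  assert (Hf : ex_RInt (fun s => mu * cos (psi s) - 1) t u).
  { apply (ex_RInt_Chasles_2_R _ 0); [lra |].
    apply (ex_RInt_Chasles_1_R _ 0 u T); [lra | exact Hx]. }
  assert (Hc : ex_RInt (fun s => mu * cos (psi s)) t u).
  { apply (ex_RInt_ext_R (fun s => (mu * cos (psi s) - 1) + 1)); [intros; ring |].
    apply ex_RInt_plus_R; [exact Hf | apply ex_RInt_const_R]. }
  split; [exact Hc |].
  unfold traj_x.
  transitivity (RInt (fun s => mu * cos (psi s) - 1) 0 u
                - RInt (fun s => mu * cos (psi s) - 1) 0 t + (u - t)); [ring |].
  rewrite (RInt_increment_R _ 0 t u T) by (lra || exact Hx).
  rewrite (RInt_ext_R _ (fun s => mu * cos (psi s) + -1)) by (intros; ring).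
  rewrite RInt_plus_R, RInt_const_R by (exact Hc || apply ex_RInt_const_R). ring.
Qed.

Lemma traj_y_increment t u : 0 <= t <= u -> u <= T ->
  ex_RInt (fun s => mu * sin (psi s)) t u /\
  Y u - Y t = RInt (fun s => mu * sin (psi s)) t u.
Proof.
  intros Htu HuT. destruct Hadm as [_ [_ [Hy _]]]. split.
  - apply (ex_RInt_Chasles_2_R _ 0); [lra |].
    apply (ex_RInt_Chasles_1_R _ 0 u T); [lra | exact Hy].
  - unfold traj_y. rewrite <- (RInt_increment_R _ 0 t u T) by (lra || exact Hy). ring.
Qed.

Lemma traj_in_reach_disk t u : 0 <= t <= u -> u <= T ->
  in_reach_disk mu (u - t) (X u - X t) (Y u - Y t).
Proof.
  intros Htu HuT.
  destruct (traj_x_increment t u Htu HuT) as [Hc Ex].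
  destruct (traj_y_increment t u Htu HuT) as [Hs Ey].
  unfold in_reach_disk. rewrite Ex, Ey.
  apply RInt_pair_sqr_le; auto; [lra | lra |].
  intros s _. pose proof (sin2_cos2 (psi s)). unfold Rsqr in *. nra.
Qed.

Lemma traj_x_decreasing t u : 0 <= t -> t < u -> u <= T -> X u < X t.
Proof.
  intros Ht Htu HuT.
  destruct (in_reach_disk_x mu (u - t) (X u - X t) (Y u - Y t)) as [_ Hx];
    [lra | lra | apply traj_in_reach_disk; lra |].
  assert (0 < (1 - mu) * (u - t)) by (apply Rmult_lt_0_compat; lra). lra.
Qed.

Lemma traj_x_le_inv t u : 0 <= t <= T -> 0 <= u <= T -> X u <= X t -> t <= u.
Proof.
  intros Ht Hu Hx. destruct (Rle_lt_dec t u) as [Hle | Hlt]; [exact Hle |].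
  pose proof (traj_x_decreasing u t); lra.
Qed.

Lemma traj_lipschitz s t : 0 <= s <= T -> 0 <= t <= T ->
  Rabs (X s - X t) <= 2 * Rabs (s - t) /\ Rabs (Y s - Y t) <= Rabs (s - t).
Proof.
  assert (Hord : forall s t, 0 <= s <= t -> t <= T ->
            Rabs (X s - X t) <= 2 * Rabs (s - t) /\ Rabs (Y s - Y t) <= Rabs (s - t)).
  { clear s t. intros s t Hst HtT.
    pose proof (traj_in_reach_disk s t Hst HtT) as Hr.
    destruct (in_reach_disk_x mu (t - s) _ _ ltac:(lra) ltac:(lra) Hr).
    destruct (in_reach_disk_y mu (t - s) _ _ ltac:(lra) ltac:(lra) Hr).
    rewrite (Rabs_minus_sym s), (Rabs_pos_eq (t - s)) by lra.
    split; apply Rabs_le; nra. }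
  intros Hs Ht. destruct (Rle_dec s t) as [Hle | Hgt]; [apply Hord; lra |].
  rewrite (Rabs_minus_sym (X s)), (Rabs_minus_sym (Y s)), (Rabs_minus_sym s).
  apply Hord; lra.
Qed.

Lemma traj_x_ivt a b c : 0 <= a <= b -> b <= T -> X b <= c <= X a ->
  exists t, a <= t <= b /\ X t = c.
Proof.
  intros Hab HbT Hc. apply (IVT_lipschitz_on X 2); [lra | |].
  - intros s t Hs Ht. apply traj_lipschitz; lra.
  - unfold Rmin, Rmax; destruct Rle_dec; lra.
Qed.

Lemma traj_y_ivt a b c : 0 <= a <= b -> b <= T -> Rmin (Y a) (Y b) <= c <= Rmax (Y a) (Y b) ->
  exists t, a <= t <= b /\ Y t = c.
Proof.
  intros Hab HbT Hc. apply (IVT_lipschitz_on Y 1); [lra | | exact Hc].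
  intros s t Hs Ht. rewrite Rmult_1_l. apply traj_lipschitz; lra.
Qed.

Section Target.

Variable theta : R.
Hypothesis Hreach : reaches mu x0 y0 psi T theta.

Lemma horizon_pos : 1 < rnorm x0 y0 -> 0 < T.
Proof.
  intros Hr. destruct (Req_dec T 0) as [HT | HT]; [| pose proof horizon_nonneg; lra].
  destruct Hreach as [Hx Hy]. destruct (traj_start mu x0 y0 psi) as [Hx0 Hy0].
  subst T. rewrite Hx0 in Hx. rewrite Hy0 in Hy.
  unfold rnorm in Hr. rewrite Hx, Hy in Hr.
  replace (cos theta ^ 2 + sin theta ^ 2) with 1 in Hr
    by (pose proof (sin2_cos2 theta); unfold Rsqr in *; lra).
  rewrite sqrt_1 in Hr. lra.
Qed.

(* Arriving on the circle from outside needs an inward velocity, while the radial components of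
   the available velocities are at least - mu - cos theta. *)
Lemma cos_target_ge : 1 < rnorm x0 y0 -> - mu <= cos theta.
Proof.
  intros Hr. pose proof (horizon_pos Hr) as HT.
  apply Ropp_le_cancel, Rle_plus_epsilon. intros eps Heps.
  set (tau := Rmin T (eps / 3)).
  assert (Htau : 0 < tau <= T /\ tau <= eps / 3)
    by (unfold tau, Rmin; destruct Rle_dec; lra).
  destruct Hreach as [Hx Hy].
  pose proof (traj_in_reach_disk (T - tau) T ltac:(lra) ltac:(lra)) as Hdisk.
  replace (T - (T - tau)) with tau in Hdisk by ring.
  rewrite Hx, Hy in Hdisk.
  pose proof (in_reach_disk_arrival mu tau _ _ (cos theta) (sin theta) ltac:(lra) ltac:(lra) Hdisk)
    as Harr.
  assert (Hcs : cos theta * cos theta + sin theta * sin theta = 1)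
    by (pose proof (sin2_cos2 theta); unfold Rsqr in *; lra).
  assert (Hout := traj_outside (T - tau) ltac:(lra)).
  replace (cos theta - (cos theta - X (T - tau))) with (X (T - tau)) in Harr by ring.
  replace (sin theta - (sin theta - Y (T - tau))) with (Y (T - tau)) in Harr by ring.
  specialize (Harr Hcs Hout).
  assert (- cos theta - mu <= 5 / 2 * tau) by (apply Rmult_le_reg_l with tau; nra).
  lra.
Qed.

Lemma traj_crosses c : cos theta <= c <= x0 -> exists t, 0 <= t <= T /\ X t = c.
Proof.
  intros Hc. destruct (traj_x_ivt 0 T c) as [t Ht]; [pose proof horizon_nonneg; lra | lra | |].
  - destruct Hreach as [-> _]. destruct (traj_start mu x0 y0 psi) as [-> _]. exact Hc.
  - exists t; exact Ht.
Qed.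

(* Otherwise the trajectory would cross the axis y = 0 between x = cos theta and x = X t, that is
   inside the disk. *)
Lemma traj_y_pos t : 0 < sin theta -> 0 <= t <= T -> -1 < X t < 1 -> 0 < Y t.
Proof.
  intros Hs Ht Hxt.
  destruct (Rlt_le_dec 0 (Y t)) as [Hy | Hy]; [exact Hy | exfalso].
  assert (Hc : -1 < cos theta) by (pose proof (sin2_cos2 theta); pose proof (COS_bound theta);
                                   unfold Rsqr in *; destruct (Req_dec (cos theta) (-1)); nra).
  destruct Hreach as [HxT HyT].
  destruct (traj_y_ivt t T 0) as [s [Hst Hys]]; [lra | lra | |].
  { rewrite HyT. unfold Rmin, Rmax; destruct Rle_dec; lra. }
  assert (X s <= X t)
    by (destruct (Req_dec s t); [subst; lra | left; apply traj_x_decreasing; lra]).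
  assert (X T <= X s)
    by (destruct (Req_dec s T); [subst; lra | left; apply traj_x_decreasing; lra]).
  pose proof (traj_outside s ltac:(lra)). rewrite Hys in *. nra.
Qed.

Lemma traj_above_arc t phi : 0 < sin theta -> 0 <= t <= T -> 0 < phi < PI ->
  X t = cos phi -> sin phi <= Y t.
Proof.
  intros Hs Ht Hphi Hx.
  assert (Hsp : 0 < sin phi) by (apply sin_gt_0; lra).
  pose proof (sin2_cos2 phi) as Hsc. unfold Rsqr in Hsc.
  assert (Hy : 0 < Y t) by (apply traj_y_pos; [exact Hs | exact Ht | rewrite Hx; nra]).
  pose proof (traj_outside t Ht) as Hout. rewrite Hx in Hout.
  nra.
Qed.

End Target.

End Trajectory.

(** * The tangent point *)

Lemma sqrt_1_plus_ratio_sqr x y : x <> 0 -> sqrt (1 + (y / x)²) = rnorm x y / Rabs x.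
Proof.
  intros Hx. unfold rnorm.
  assert (Hax : 0 < Rabs x) by (apply Rabs_pos_lt; exact Hx).
  assert (Hxx : Rabs x * Rabs x = x ^ 2) by (unfold Rabs; destruct Rcase_abs; ring).
  rewrite <- (sqrt_square (Rabs x)) by lra. rewrite <- sqrt_div_alt by nra.
  f_equal. unfold Rsqr. rewrite Hxx. field. exact Hx.
Qed.

Lemma atan2_polar x y : 0 <= y -> 0 < x ^ 2 + y ^ 2 ->
  cos (atan2 y x) = x / rnorm x y /\ sin (atan2 y x) = y / rnorm x y /\ 0 <= atan2 y x.
Proof.
  intros Hy Hr.
  assert (Hr0 : 0 < rnorm x y) by (apply sqrt_lt_R0; lra).
  pose proof PI_RGT_0.
  unfold atan2.
  destruct (Rlt_dec 0 x) as [Hx | Hx]; [| destruct (Rlt_dec x 0) as [Hx' | Hx']].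
  - rewrite cos_atan, sin_atan, sqrt_1_plus_ratio_sqr, Rabs_pos_eq by lra.
    split; [field; lra |]. split; [field; lra |].
    destruct (Req_dec y 0) as [-> | Hy0]; [unfold Rdiv; rewrite Rmult_0_l, atan_0; lra |].
    left. rewrite <- atan_0. apply atan_increasing, Rdiv_lt_0_compat; lra.
  - destruct (Rle_dec 0 y) as [_ | Hy']; [| lra].
    rewrite neg_cos, neg_sin, cos_atan, sin_atan, sqrt_1_plus_ratio_sqr, Rabs_left by lra.
    split; [field; lra |]. split; [field; lra |].
    pose proof (atan_bound (y / x)). lra.
  - assert (Hx0 : x = 0) by lra. subst x.
    assert (Hy0 : 0 < y) by (destruct (Req_dec y 0); [subst; lra | lra]).
    assert (Ery : rnorm 0 y = y) by (apply sqrt_lem_1; nra).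
    destruct (Rlt_dec 0 y) as [_ | Hy']; [| lra].
    rewrite cos_PI2, sin_PI2, Ery. split; [field; lra |]. split; [field; lra | lra].
Qed.

(* Seen from the origin, the tangent point lies acos (1 / |x0|) counterclockwise from x0, and x0 is
   reached from it by going the tangent length L along (sin a, - cos a). *)
Lemma tangent_point x0 y0 : 1 < rnorm x0 y0 -> 0 <= y0 ->
  let a := theta_tan x0 y0 in let L := sqrt (rnorm x0 y0 ^ 2 - 1) in
  0 < a /\ 0 < L /\ x0 = cos a + L * sin a /\ y0 = sin a - L * cos a.
Proof.
  intros Hr Hy a L. unfold a, theta_tan. set (r := rnorm x0 y0) in *.
  assert (Hrr : r * r = x0 ^ 2 + y0 ^ 2) by (apply sqrt_sqrt; nra).
  destruct (atan2_polar x0 y0 Hy ltac:(nra)) as [Ca [Sa Ha]]. fold r in Ca, Sa.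
  assert (HL : L * L = r ^ 2 - 1) by (apply sqrt_sqrt; nra).
  assert (HL0 : 0 < L) by (apply sqrt_lt_R0; nra).
  assert (Hinv : 0 < 1 / r < 1)
    by (split; [apply Rdiv_lt_0_compat | apply Rmult_lt_reg_r with r; field_simplify]; lra).
  assert (Cb : cos (acos (1 / r)) = 1 / r) by (apply cos_acos; lra).
  assert (Sb : sin (acos (1 / r)) = L / r).
  { rewrite sin_acos by lra.
    apply sqrt_lem_1; [unfold Rsqr; nra | apply Rlt_le, Rdiv_lt_0_compat; lra |].
    unfold Rsqr. replace (L / r * (L / r)) with ((L * L) / (r * r)) by (field; lra).
    rewrite HL. field. lra. }
  assert (Hb0 : 0 < acos (1 / r)) by (apply acos_bound_lt; lra).
  rewrite cos_plus, sin_plus, Cb, Sb, Ca, Sa.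
  split; [lra |]. split; [exact HL0 |].
  split; field_simplify; try lra; apply Rmult_eq_reg_r with (r ^ 2); try nra;
    field_simplify; try lra; replace (L ^ 2) with (L * L) by ring; rewrite HL;
    replace (r ^ 2) with (r * r) by ring; rewrite Hrr; field.
Qed.

(** * Moving along the circle *)

(* Moving along the circle at angle p means moving in the direction (- sin p, cos p); the largest
   such speed with a relative velocity in the disk of radius mu around (-1, 0) is the larger root
   of v^2 - 2 v sin p + 1 - mu^2 = 0. *)
Definition arc_slack (mu p : R) : R := sqrt (mu ^ 2 - cos p ^ 2).
Definition arc_speed (mu p : R) : R := sin p + arc_slack mu p.
Definition arc_weight (mu p : R) : R := cos p / arc_slack mu p.

(* Clamping extends the integrand continuously to all of R, which makes [arc_time] an increasing
   bijection of R. *)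
Definition arc_time (mu a b p : R) : R := RInt (fun q => / arc_speed mu (clamp a b q)) a p.

Lemma arc_time_start mu a b : arc_time mu a b a = 0.
Proof. exact (RInt_point (V := R_CompleteNormedModule) a _). Qed.

Definition followable_arc (mu a b : R) : Prop :=
  0 < mu < 1 /\ 0 < a /\ a <= b /\ b < PI /\ cos a <= mu /\ - mu <= cos b.

Section Arc.

Variables mu a b : R.
Hypothesis HA : followable_arc mu a b.

Let Hmu : 0 < mu < 1 := proj1 HA.
Let Ha : 0 < a := proj1 (proj2 HA).
Let Hab : a <= b := proj1 (proj2 (proj2 HA)).
Let Hb : b < PI := proj1 (proj2 (proj2 (proj2 HA))).
Let Hca : cos a <= mu := proj1 (proj2 (proj2 (proj2 (proj2 HA)))).
Let Hcb : - mu <= cos b := proj2 (proj2 (proj2 (proj2 (proj2 HA)))).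

Local Notation F := (arc_time mu a b).

Lemma cos_arc p : a <= p <= b -> - mu <= cos p <= mu.
Proof.
  intros Hp. split.
  - apply Rle_trans with (cos b); [exact Hcb |]. apply cos_decr_1; lra.
  - apply Rle_trans with (cos a); [| exact Hca]. apply cos_decr_1; lra.
Qed.

Lemma sin_arc_pos p : a <= p <= b -> 0 < sin p.
Proof. intros; apply sin_gt_0; lra. Qed.

Lemma arc_slack_sqr p : a <= p <= b -> arc_slack mu p * arc_slack mu p = mu * mu - cos p * cos p.
Proof. intros Hp. pose proof (cos_arc p Hp). unfold arc_slack. rewrite sqrt_sqrt; nra. Qed.

Lemma arc_slack_pos p : a < p < b -> 0 < arc_slack mu p.
Proof.
  intros Hp. apply sqrt_lt_R0.
  assert (cos b < cos p < cos a) by (split; apply cos_decreasing_1; lra).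
  nra.
Qed.

Lemma arc_speed_bounds p : a <= p <= b -> 1 - mu * mu <= arc_speed mu p <= 2.
Proof.
  intros Hp. pose proof (cos_arc p Hp). pose proof (sin_arc_pos p Hp).
  pose proof (arc_slack_sqr p Hp). pose proof (sqrt_pos (mu ^ 2 - cos p ^ 2)).
  pose proof (sin2_cos2 p). unfold arc_speed, Rsqr in *. fold (arc_slack mu p) in *.
  assert (sin p <= 1) by nra. assert (arc_slack mu p <= 1) by nra.
  assert (1 - mu * mu <= sin p) by nra.
  lra.
Qed.

Lemma arc_weight_antitone p q : a <= p <= q -> q <= b ->
  0 < arc_slack mu p -> 0 < arc_slack mu q -> arc_weight mu q <= arc_weight mu p.
Proof.
  intros Hpq Hq Hwp Hwq.
  pose proof (arc_slack_sqr p ltac:(lra)). pose proof (arc_slack_sqr q ltac:(lra)).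
  pose proof (cos_arc p ltac:(lra)). pose proof (cos_arc q ltac:(lra)).
  unfold arc_weight, arc_slack in *.
  apply ratio_sqrt_le; [nra | apply cos_decr_1; lra | nra].
Qed.

Lemma clamped_speed_bounds q : 1 - mu * mu <= arc_speed mu (clamp a b q) <= 2.
Proof. apply arc_speed_bounds, clamp_in; exact Hab. Qed.

Lemma clamped_speed_continuous q : continuous (fun q => arc_speed mu (clamp a b q)) q.
Proof.
  apply (continuous_comp (clamp a b) (arc_speed mu)).
  - apply (lipschitz_continuous _ 1). intros. rewrite Rmult_1_l. apply clamp_lipschitz, Hab.
  - apply (continuous_plus (V := R_NormedModule) sin (arc_slack mu)).
    + apply continuity_pt_filterlim, continuity_sin.
    + apply continuous_sqrt_comp.
      apply (ex_derive_continuous (fun p => mu ^ 2 - cos p ^ 2)). auto_derive; auto.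
Qed.

Lemma inv_speed_continuous q : continuous (fun q => / arc_speed mu (clamp a b q)) q.
Proof.
  apply continuous_Rinv_comp; [apply clamped_speed_continuous |].
  pose proof (clamped_speed_bounds q); nra.
Qed.

Lemma ex_RInt_inv_speed x y : ex_RInt (fun q => / arc_speed mu (clamp a b q)) x y.
Proof. apply ex_RInt_continuous_R. intros; apply inv_speed_continuous. Qed.

Lemma arc_time_diff x y : F y - F x = RInt (fun q => / arc_speed mu (clamp a b q)) x y.
Proof.
  unfold arc_time. rewrite <- (RInt_Chasles_R _ a x y) by apply ex_RInt_inv_speed. ring.
Qed.

Lemma arc_time_incr x y : x <= y -> (y - x) / 2 <= F y - F x.
Proof.
  intros Hxy. rewrite arc_time_diff.
  replace ((y - x) / 2) with ((y - x) * / 2) by field. rewrite <- RInt_const_R.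
  apply RInt_le; [exact Hxy | apply ex_RInt_const_R | apply ex_RInt_inv_speed |].
  intros q _. pose proof (clamped_speed_bounds q). apply Rinv_le_contravar; nra.
Qed.

Lemma arc_time_derive x : is_derive F x (/ arc_speed mu (clamp a b x)).
Proof.
  apply (is_derive_RInt (V := R_NormedModule) (fun q => / arc_speed mu (clamp a b q)) F a x).
  - apply filter_forall. intros y. apply (RInt_correct (V := R_CompleteNormedModule)).
    apply ex_RInt_inv_speed.
  - apply inv_speed_continuous.
Qed.

Lemma arc_time_onto s : {p | F p = s}.
Proof.
  assert (HF : continuity F).
  { intros x. apply continuity_pt_filterlim. apply (ex_derive_continuous F).
    eexists; apply arc_time_derive. }
  pose proof (Rabs_pos s). pose proof (Rle_abs s). pose proof (Rle_abs (- s)).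
  rewrite Rabs_Ropp in *.
  destruct (IVT_gen F (a - 2 * Rabs s) (a + 2 * Rabs s) s HF) as [p [_ Hp]]; [| exists p; exact Hp].
  pose proof (arc_time_incr (a - 2 * Rabs s) a ltac:(lra)).
  pose proof (arc_time_incr a (a + 2 * Rabs s) ltac:(lra)).
  rewrite arc_time_start in *. unfold Rmin, Rmax; destruct Rle_dec; lra.
Qed.

Definition arc_angle (s : R) : R := proj1_sig (arc_time_onto s).

Local Notation G := arc_angle.

Lemma arc_time_angle s : F (G s) = s.
Proof. exact (proj2_sig (arc_time_onto s)). Qed.

Lemma arc_angle_le s s' : s <= s' -> G s <= G s'.
Proof.
  intros Hs. destruct (Rle_lt_dec (G s) (G s')) as [Hle | Hlt]; [exact Hle |].
  pose proof (arc_time_incr (G s') (G s) ltac:(lra)). rewrite !arc_time_angle in *. lra.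
Qed.

Lemma arc_angle_time p : G (F p) = p.
Proof.
  pose proof (arc_time_angle (F p)) as E.
  destruct (Rtotal_order (G (F p)) p) as [Hlt | [Heq | Hgt]]; [| exact Heq |].
  - pose proof (arc_time_incr (G (F p)) p ltac:(lra)). lra.
  - pose proof (arc_time_incr p (G (F p)) ltac:(lra)). lra.
Qed.

Lemma arc_angle_start : G 0 = a.
Proof. rewrite <- (arc_time_start mu a b). apply arc_angle_time. Qed.

Lemma arc_angle_end : G (F b) = b.
Proof. apply arc_angle_time. Qed.

Lemma arc_duration_nonneg : 0 <= F b.
Proof. pose proof (arc_time_incr a b Hab). rewrite arc_time_start in *. lra. Qed.

Lemma arc_angle_lipschitz s s' : Rabs (G s - G s') <= 2 * Rabs (s - s').
Proof.
  destruct (Rle_dec s s') as [Hle | Hgt].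
  - pose proof (arc_angle_le s s' Hle). pose proof (arc_time_incr (G s) (G s') ltac:(lra)).
    rewrite !arc_time_angle in *. rewrite !Rabs_left1 by lra. lra.
  - pose proof (arc_angle_le s' s ltac:(lra)). pose proof (arc_time_incr (G s') (G s) ltac:(lra)).
    rewrite !arc_time_angle in *. rewrite !Rabs_pos_eq by lra. lra.
Qed.

Lemma arc_angle_continuous s : continuous G s.
Proof. apply (lipschitz_continuous G 2), arc_angle_lipschitz. Qed.

Lemma arc_angle_derive s : is_derive G s (arc_speed mu (clamp a b (G s))).
Proof.
  pose proof (clamped_speed_bounds (G s)) as Hv.
  set (DF := fun p => exist (fun l => derivable_pt_lim F p l) _
                        (proj1 (is_derive_Reals _ _ _) (arc_time_derive p))).
  apply is_derive_Reals.
  replace (arc_speed mu (clamp a b (G s))) with (1 / / arc_speed mu (clamp a b (G s)))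
    by (field; nra).
  apply (Ranalysis5.derivable_pt_lim_recip_interv F G (s - 1) (s + 1) s (fun p _ => DF p)).
  - apply continuity_pt_filterlim, arc_angle_continuous.
  - lra.
  - lra.
  - split; apply arc_angle_le; lra.
  - intros x _. apply arc_time_angle.
  - simpl. apply Rinv_neq_0_compat. nra.
Qed.

(* Replacing each arc of angle d by its chord costs only O(d^3) in length, so the time along
   the circle is the limit of the times needed to run the chords at the midpoint speed. *)
Lemma arc_time_chord_approx eps : 0 < eps -> exists rho, 0 < rho /\
  forall p d, a <= p -> 0 <= d <= rho -> p + d <= b ->
  F (p + d) - F p <= 2 * sin (d / 2) / arc_speed mu (p + d / 2) + eps * d.
Proof.
  intros Heps.
  set (h := fun q => / arc_speed mu (clamp a b q)).
  destruct (Heine_cor2 (f := h) (a := a) (b := b)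
              (fun q _ => proj2 (continuity_pt_filterlim _ _) (inv_speed_continuous q))
              (mkposreal (eps / 2) ltac:(lra))) as [delta Hdelta]. simpl in Hdelta.
  pose proof (cond_pos delta) as Hdelta0.
  assert (Hm2 : 0 < 1 - mu * mu) by nra.
  exists (Rmin (Rmin 1 delta) (12 * eps * (1 - mu * mu))).
  split; [apply Rmin_pos; [apply Rmin_pos |]; nra |].
  intros p d Hp Hd Hpd.
  pose proof (Rmin_l (Rmin 1 delta) (12 * eps * (1 - mu * mu))).
  pose proof (Rmin_r (Rmin 1 delta) (12 * eps * (1 - mu * mu))).
  pose proof (Rmin_l 1 delta). pose proof (Rmin_r 1 delta).
  set (m := p + d / 2).
  assert (Hhm : h m = / arc_speed mu m)
    by (unfold h; rewrite clamp_id by (unfold m; lra); reflexivity).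
  assert (Hhm0 : 0 <= h m <= / (1 - mu * mu)).
  { pose proof (clamped_speed_bounds m). unfold h.
    split; [left; apply Rinv_0_lt_compat; nra | apply Rinv_le_contravar; nra]. }
  assert (Hint : F (p + d) - F p <= d * (h m + eps / 2)).
  { rewrite arc_time_diff. fold h.
    replace (d * (h m + eps / 2)) with ((p + d - p) * (h m + eps / 2)) by ring.
    rewrite <- RInt_const_R.
    apply RInt_le; [lra | apply ex_RInt_inv_speed | apply ex_RInt_const_R |].
    intros z Hz.
    assert (Hclose : Rabs (h z - h m) < eps / 2)
      by (apply Hdelta; unfold m; try apply Rabs_def1; lra).
    apply Rabs_def2 in Hclose. lra. }
  pose proof (two_sin_half_ge d ltac:(lra)) as Hsin.
  assert (Hcube : d ^ 3 / 24 * h m <= eps / 2 * d).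
  { apply Rle_trans with (d ^ 3 / 24 * / (1 - mu * mu)); [apply Rmult_le_compat_l; nra |].
    apply Rmult_le_reg_r with (1 - mu * mu); [lra |].
    field_simplify; [| lra]. nra. }
  unfold Rdiv at 1. rewrite <- Hhm. nra.
Qed.

End Arc.

Definition arc_heading (mu p : R) : R :=
  unit_angle ((1 - arc_speed mu p * sin p) / mu) (arc_speed mu p * cos p / mu).

Lemma arc_heading_velocity mu p : 0 < mu -> cos p ^ 2 <= mu ^ 2 ->
  mu * cos (arc_heading mu p) - 1 = - (arc_speed mu p * sin p) /\
  mu * sin (arc_heading mu p) = arc_speed mu p * cos p.
Proof.
  intros Hmu Hc.
  assert (Hw : arc_slack mu p * arc_slack mu p = mu * mu - cos p * cos p)
    by (unfold arc_slack; rewrite sqrt_sqrt; nra).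
  pose proof (sin2_cos2 p) as Hsc. unfold Rsqr in Hsc.
  set (v := arc_speed mu p).
  assert (Hv : (1 - v * sin p) * (1 - v * sin p) + (v * cos p) * (v * cos p) = mu * mu).
  { transitivity (1 - 2 * v * sin p + v * v * (sin p * sin p + cos p * cos p)); [ring |].
    rewrite Hsc. unfold v, arc_speed.
    transitivity (1 - sin p * sin p + arc_slack mu p * arc_slack mu p); [ring |].
    rewrite Hw. lra. }
  destruct (unit_angle_spec ((1 - v * sin p) / mu) (v * cos p / mu)) as [Hcos Hsin].
  { transitivity (((1 - v * sin p) * (1 - v * sin p) + (v * cos p) * (v * cos p)) / (mu * mu));
      [field; lra | rewrite Hv; field; lra]. }
  unfold arc_heading. fold v. rewrite Hcos, Hsin. split; field; lra.
Qed.

(** * The lower bound *)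

Section TangentApproach.

Variables (mu x0 y0 : R) (psi : R -> R) (T a b L : R).
Hypothesis Hmu : 0 < mu < 1.
Hypothesis Hadm : admissible mu x0 y0 psi T.
Hypothesis Hreach : reaches mu x0 y0 psi T b.
Hypothesis Ha : 0 < a.
Hypothesis Hab : a <= b.
Hypothesis Hb : b < PI.
Hypothesis HL : 0 < L.
Hypothesis Hx0 : x0 = cos a + L * sin a.
Hypothesis Hy0 : y0 = sin a - L * cos a.

Local Notation X := (traj_x mu x0 psi).
Local Notation Y := (traj_y mu y0 psi).

Lemma crossing_exists p : a <= p <= b -> exists t, 0 <= t <= T /\ X t = cos p.
Proof.
  intros Hp. apply (traj_crosses mu x0 y0 psi T Hmu Hadm b Hreach).
  assert (0 < sin a) by (apply sin_gt_0; lra).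
  assert (cos p <= cos a) by (apply cos_decr_1; lra).
  split; [apply cos_decr_1; lra | nra].
Qed.

Lemma crossing_above p t : a <= p <= b -> 0 <= t <= T -> X t = cos p -> sin p <= Y t.
Proof.
  intros Hp Ht Hx. apply (traj_above_arc mu x0 y0 psi T Hmu Hadm b Hreach); auto; [| lra].
  apply sin_gt_0; lra.
Qed.

Lemma tangent_chord t : 0 <= t <= T -> X t = cos a ->
  in_reach_disk mu t (- (L * sin a)) ((Y t - sin a) + L * cos a).
Proof.
  intros Ht Hx.
  pose proof (traj_in_reach_disk mu x0 y0 psi T Hmu Hadm 0 t ltac:(lra) ltac:(lra)) as H.
  destruct (traj_start mu x0 y0 psi) as [E1 E2]. rewrite E1, E2, Hx, Rminus_0_r in H.
  replace (cos a - x0) with (- (L * sin a)) in H by (rewrite Hx0; ring).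
  replace (Y t - y0) with ((Y t - sin a) + L * cos a) in H by (rewrite Hy0; ring).
  exact H.
Qed.

(* The tangent direction (- sin a, cos a) must lie in the cone of available velocities. *)
Lemma cos_tangent_le : cos a <= mu.
Proof.
  destruct (crossing_exists a ltac:(lra)) as [t [Ht Hx]].
  pose proof (crossing_above a t ltac:(lra) Ht Hx) as He.
  pose proof (in_reach_disk_slope mu t _ _ ltac:(lra) (tangent_chord t Ht Hx)) as Hslope.
  destruct (Rle_lt_dec (cos a) 0) as [Hc | Hc]; [lra |].
  set (dy := (Y t - sin a) + L * cos a) in *.
  assert (Hdy : (L * cos a) * (L * cos a) <= dy * dy).
  { unfold dy. assert (0 <= L * cos a) by nra. apply Rmult_le_compat; lra. }
  pose proof (sin2_cos2 a) as Hsc. unfold Rsqr in Hsc.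
  assert (HL2 : 0 < L * L) by nra.
  assert (Hk : (1 - mu * mu) * (cos a * cos a) * (L * L) <= mu * mu * (sin a * sin a) * (L * L))
    by nra.
  apply Rmult_le_reg_r in Hk; [| exact HL2].
  nra.
Qed.

Section LowerBound.

Hypothesis HA : followable_arc mu a b.

Local Notation F := (arc_time mu a b).
Local Notation v := (arc_speed mu).
Local Notation w := (arc_slack mu).
Local Notation B := (arc_weight mu).

Lemma tangent_crossing_support t : 0 <= t <= T -> X t = cos a ->
  L * w a + v a * cos a * (Y t - sin a) <= t * (v a * w a).
Proof.
  intros Ht Hx. pose proof (sin2_cos2 a). unfold Rsqr in *.
  apply (in_reach_disk_support mu t (sin a) (cos a) (w a)); try lra.
  - exact (tangent_chord t Ht Hx).
  - apply (arc_slack_sqr mu a b HA). lra.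
  - apply sqrt_pos.
Qed.

Lemma tangent_crossing_exact t : 0 <= t <= T -> X t = cos a -> Y t = sin a -> L / v a <= t.
Proof.
  intros Ht Hx Hy. pose proof (sin2_cos2 a). unfold Rsqr in *.
  pose proof (tangent_chord t Ht Hx) as Hc. rewrite Hy, Rminus_diag, Rplus_0_l in Hc.
  pose proof (arc_speed_bounds mu a b HA a ltac:(lra)).
  pose proof (sin_arc_pos mu a b HA a ltac:(lra)).
  assert (L <= t * v a); [| apply Rmult_le_reg_r with (v a); [nra |]; field_simplify; nra].
  apply (in_reach_disk_along mu t (sin a) (cos a) (w a)); try lra.
  - exact Hc.
  - apply (arc_slack_sqr mu a b HA). lra.
  - apply sqrt_pos.
Qed.

Lemma tangent_crossing_bound t beta : a < b -> 0 <= t <= T -> X t = cos a ->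
  (0 < w a -> beta <= B a) -> L / v a + beta * (Y t - sin a) <= t.
Proof.
  intros Hab' Ht Hx Hbeta.
  pose proof (crossing_above a t ltac:(lra) Ht Hx) as He.
  pose proof (tangent_crossing_support t Ht Hx) as Hs.
  pose proof (arc_speed_bounds mu a b HA a ltac:(lra)).
  destruct (Rlt_dec 0 (w a)) as [Hw | Hw].
  - apply support_bound_div in Hs; [| nra | exact Hw].
    specialize (Hbeta Hw). unfold arc_weight in Hbeta. nra.
  - (* A vanishing slack means cos a = mu, and then the support inequality puts the crossing on
       the circle. *)
    assert (Hw0 : w a = 0)
      by (pose proof (sqrt_pos (mu ^ 2 - cos a ^ 2)); unfold arc_slack in *; lra).
    assert (Hcb : cos b < cos a) by (apply cos_decreasing_1; lra).
    pose proof (arc_slack_sqr mu a b HA a ltac:(lra)) as Hw2. rewrite Hw0 in Hw2.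
    pose proof (cos_arc mu a b HA b ltac:(lra)).
    assert (Hc : cos a = mu) by nra.
    rewrite Hw0, Hc in Hs.
    assert (Hvmu : 0 < v a * mu) by nra.
    assert (Hy : Y t = sin a) by nra.
    rewrite Hy, Rminus_diag, Rmult_0_r, Rplus_0_r. apply tangent_crossing_exact; auto.
Qed.

Lemma crossing_final t : 0 <= t <= T -> X t = cos b -> t = T /\ Y t = sin b.
Proof.
  intros Ht Hx. pose proof (horizon_nonneg mu x0 y0 psi T Hadm). destruct Hreach as [HxT HyT].
  assert (E : t = T).
  { apply Rle_antisym; apply (traj_x_le_inv mu x0 y0 psi T Hmu Hadm); lra. }
  subst t. split; [reflexivity | exact HyT].
Qed.

(* The chord from angle p to angle q points in the direction (- sin m, cos m) of the midpoint
   angle m, so the supporting half-plane of the reach disk in that direction applies. *)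
Lemma chord_crossing_bound p q t t' : a <= p -> p < q -> q <= b ->
  0 <= t <= T -> 0 <= t' <= T -> X t = cos p -> X t' = cos q ->
  2 * sin ((q - p) / 2) / v ((p + q) / 2)
  + B ((p + q) / 2) * ((Y t' - sin q) - (Y t - sin p)) <= t' - t.
Proof.
  intros Hp Hpq Hq Ht Ht' Hx Hx'.
  assert (Htt : t <= t').
  { apply (traj_x_le_inv mu x0 y0 psi T Hmu Hadm); [lra | lra |].
    rewrite Hx, Hx'. apply cos_decr_1; lra. }
  set (m := (p + q) / 2). set (h := (q - p) / 2).
  pose proof (traj_in_reach_disk mu x0 y0 psi T Hmu Hadm t t' ltac:(lra) ltac:(lra)) as Hdisk.
  replace (X t' - X t) with (- (2 * sin h * sin m)) in Hdisk
    by (rewrite Hx, Hx', form2; unfold h, m; rewrite (Rplus_comm q p); ring).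
  replace (Y t' - Y t) with (((Y t' - sin q) - (Y t - sin p)) + 2 * sin h * cos m) in Hdisk
    by (pose proof (form4 q p) as E; unfold h, m; rewrite (Rplus_comm q p) in E; lra).
  assert (Hm : a < m < b) by (unfold m; lra).
  pose proof (arc_slack_pos mu a b HA m Hm) as Hw.
  pose proof (arc_speed_bounds mu a b HA m ltac:(lra)).
  pose proof (sin2_cos2 m). unfold Rsqr in *.
  apply support_bound_div; [nra | exact Hw |].
  apply (in_reach_disk_support mu (t' - t) (sin m) (cos m) (w m)); try lra.
  - exact Hdisk.
  - apply (arc_slack_sqr mu a b HA). lra.
Qed.

Section Chain.

Variables (phi : nat -> R) (N : nat) (delta : R).
Hypothesis HN : (0 < N)%nat.
Hypothesis Hphi0 : phi 0%nat = a.
Hypothesis HphiN : phi N = b.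
Hypothesis Hphi_range : forall j, (j <= N)%nat -> a <= phi j <= b.
Hypothesis Hphi_incr : forall j, (j < N)%nat -> phi j < phi (S j).
Hypothesis Hpiece : forall j, (j < N)%nat ->
  F (phi (S j)) - F (phi j)
  <= 2 * sin ((phi (S j) - phi j) / 2) / v ((phi j + phi (S j)) / 2) + delta.

Local Notation mid j := ((phi j + phi (S j)) / 2).

Lemma mid_interior j : (j < N)%nat -> a < mid j < b /\ 0 < w (mid j).
Proof.
  intros Hj. pose proof (Hphi_range j ltac:(lia)). pose proof (Hphi_range (S j) ltac:(lia)).
  pose proof (Hphi_incr j Hj).
  assert (Hm : a < mid j < b) by lra.
  split; [exact Hm | apply (arc_slack_pos mu a b HA _ Hm)].
Qed.

Lemma crossing_chain_start t beta : 0 <= t <= T -> X t = cos (phi 0%nat) ->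
  beta <= B (mid 0%nat) ->
  L / v a + F (phi 0%nat) - INR 0 * delta + beta * (Y t - sin (phi 0%nat)) <= t.
Proof.
  intros Ht Hx Hbeta. destruct (mid_interior 0%nat HN) as [Hm Hwm].
  rewrite Hphi0 in *. rewrite arc_time_start.
  replace (L / v a + 0 - INR 0 * delta) with (L / v a) by (simpl; ring).
  apply tangent_crossing_bound; [lra | exact Ht | exact Hx |].
  intros Hwa. eapply Rle_trans; [exact Hbeta |].
  apply (arc_weight_antitone mu a b HA); lra.
Qed.

(* Heights above the circle are nonnegative and the weights [B] decrease along the arc, so the
   weight of the current chord can be traded for that of the next one. *)
Lemma crossing_chain j : (j <= N)%nat -> forall t beta, 0 <= t <= T -> X t = cos (phi j) ->
  ((j < N)%nat -> beta <= B (mid j)) ->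
  L / v a + F (phi j) - INR j * delta + beta * (Y t - sin (phi j)) <= t.
Proof.
  induction j as [| j IH]; intros Hj t' beta Ht' Hx' Hbeta.
  - apply crossing_chain_start; auto.
  - pose proof (Hphi_range j ltac:(lia)). pose proof (Hphi_range (S j) Hj).
    pose proof (Hphi_incr j ltac:(lia)).
    destruct (crossing_exists (phi j) ltac:(lra)) as [t [Ht Hx]].
    pose proof (IH ltac:(lia) t (B (mid j)) Ht Hx (fun _ => Rle_refl _)) as Hprev.
    pose proof (chord_crossing_bound (phi j) (phi (S j)) t t' ltac:(lra) ltac:(lra) ltac:(lra)
                  Ht Ht' Hx Hx') as Hstep.
    pose proof (Hpiece j ltac:(lia)).
    pose proof (crossing_above (phi (S j)) t' ltac:(lra) Ht' Hx') as He.
    assert (Hlast : beta * (Y t' - sin (phi (S j))) <= B (mid j) * (Y t' - sin (phi (S j)))).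
    { destruct (Nat.lt_ge_cases (S j) N) as [HSj | HSj].
      - apply Rmult_le_compat_r; [lra |].
        eapply Rle_trans; [exact (Hbeta HSj) |].
        destruct (mid_interior j ltac:(lia)). destruct (mid_interior (S j) HSj).
        pose proof (Hphi_incr (S j) HSj).
        apply (arc_weight_antitone mu a b HA); lra.
      - assert (S j = N) by lia. subst N.
        rewrite HphiN in Hx' |- *. destruct (crossing_final t' Ht' Hx') as [_ ->].
        rewrite Rminus_diag, !Rmult_0_r. lra. }
    rewrite S_INR. lra.
Qed.

End Chain.

Lemma arc_lower_bound_eps eps : a < b -> 0 < eps -> L / v a + F b <= T + eps.
Proof.
  intros Hab' Heps. assert (Hba : 0 < b - a) by lra.
  destruct (arc_time_chord_approx mu a b HA (eps / (b - a))) as [rho [Hrho Happrox]];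
    [apply Rdiv_lt_0_compat; lra |].
  destruct (fine_subdivision (b - a) rho Hba Hrho) as [N [HN Hdrho]].
  assert (HNpos : 0 < INR N) by (apply lt_0_INR; exact HN).
  set (d := (b - a) / INR N) in *.
  assert (Hd : 0 < d) by (apply Rdiv_lt_0_compat; lra).
  assert (HNd : INR N * d = b - a) by (unfold d; field; lra).
  set (phi := fun j => a + INR j * d).
  assert (HphiN : phi N = b) by (unfold phi; lra).
  assert (Hrange : forall j, (j <= N)%nat -> a <= phi j <= b).
  { intros j Hj. apply le_INR in Hj. pose proof (pos_INR j). unfold phi. split; nra. }
  assert (Hstep : forall j, phi (S j) = phi j + d) by (intros; unfold phi; rewrite S_INR; ring).
  assert (Hpiece : forall j, (j < N)%nat -> F (phi (S j)) - F (phi j)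
            <= 2 * sin ((phi (S j) - phi j) / 2) / v ((phi j + phi (S j)) / 2) + eps / (b - a) * d).
  { intros j Hj. pose proof (Hrange (S j) Hj). rewrite Hstep in *.
    replace (phi j + d - phi j) with d by ring.
    replace ((phi j + (phi j + d)) / 2) with (phi j + d / 2) by field.
    apply Happrox; [apply (Hrange j); lia | lra | lra]. }
  pose proof (horizon_nonneg mu x0 y0 psi T Hadm). destruct Hreach as [HxT _].
  pose proof (crossing_chain phi N (eps / (b - a) * d) HN ltac:(unfold phi; simpl; ring) HphiN
                Hrange ltac:(intros j _; rewrite Hstep; lra) Hpiece N (Nat.le_refl N) T 0 ltac:(lra))
    as Hfin.
  rewrite HphiN in Hfin. specialize (Hfin HxT ltac:(lia)).
  replace (INR N * (eps / (b - a) * d)) with eps in Hfin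
    by (transitivity (INR N * d * (eps / (b - a))); [rewrite HNd; field; lra | ring]).
  lra.
Qed.

Lemma arc_lower_bound : L / v a + F b <= T.
Proof.
  destruct (Req_dec a b) as [Eab | Hab'].
  - assert (HF : F b = 0) by (rewrite <- Eab; apply arc_time_start).
    rewrite HF, Rplus_0_r. destruct Hreach as [HxT HyT]. rewrite <- Eab in HxT, HyT.
    apply tangent_crossing_exact; auto. split; [apply (horizon_nonneg mu x0 y0 psi T Hadm) | lra].
  - apply Rle_plus_epsilon. intros eps Heps. apply arc_lower_bound_eps; lra.
Qed.

End LowerBound.

End TangentApproach.

(** * The optimal trajectory *)

Section Construction.

Variables mu x0 y0 a b L : R.
Hypothesis HA : followable_arc mu a b.
Hypothesis HL : 0 < L.
Hypothesis Hx0 : x0 = cos a + L * sin a.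
Hypothesis Hy0 : y0 = sin a - L * cos a.

Let Hmu : 0 < mu < 1 := proj1 HA.
Let Hab : a <= b := proj1 (proj2 (proj2 HA)).

Local Notation G := (arc_angle mu a b HA).
Local Notation v := (arc_speed mu).
Local Notation t1 := (L / arc_speed mu a).
Local Notation T_opt := (L / arc_speed mu a + arc_time mu a b b).

(* The angle of the point of the circle the Evader is heading for (tangent phase) or sitting at
   (arc phase). *)
Definition guide_angle (t : R) : R := G (Rmax 0 (t - L / arc_speed mu a)).
Definition optimal_heading (t : R) : R := arc_heading mu (guide_angle t).

Local Notation X := (traj_x mu x0 optimal_heading).
Local Notation Y := (traj_y mu y0 optimal_heading).

Lemma tangent_time_pos : 0 < t1.
Proof.
  pose proof (arc_speed_bounds mu a b HA a ltac:(lra)).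
  apply Rdiv_lt_0_compat; nra.
Qed.

Lemma guide_angle_range t : t <= T_opt -> a <= guide_angle t <= b.
Proof.
  intros Ht. pose proof (arc_angle_start mu a b HA). pose proof (arc_angle_end mu a b HA).
  unfold guide_angle.
  assert (G 0 <= G (Rmax 0 (t - t1))) by (apply arc_angle_le, Rmax_l).
  assert (G (Rmax 0 (t - t1)) <= G (arc_time mu a b b))
    by (apply arc_angle_le; pose proof (arc_duration_nonneg mu a b HA);
        unfold Rmax; destruct Rle_dec; lra).
  lra.
Qed.

Lemma guide_angle_tangent t : t <= t1 -> guide_angle t = a.
Proof. intros Ht. unfold guide_angle. rewrite Rmax_left by lra. apply arc_angle_start. Qed.

Lemma guide_angle_arc t : t1 <= t -> guide_angle t = G (t - t1).
Proof. intros Ht. unfold guide_angle. rewrite Rmax_right by lra. reflexivity. Qed.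

Lemma optimal_velocity t : t <= T_opt ->
  mu * cos (optimal_heading t) - 1 = - (v (guide_angle t) * sin (guide_angle t)) /\
  mu * sin (optimal_heading t) = v (guide_angle t) * cos (guide_angle t).
Proof.
  intros Ht. apply arc_heading_velocity; [lra |].
  pose proof (cos_arc mu a b HA _ (guide_angle_range t Ht)). nra.
Qed.

Lemma tangent_phase_RInt t : 0 <= t <= t1 ->
  ex_RInt (fun s => mu * cos (optimal_heading s) - 1) 0 t /\
  - (t * (v a * sin a)) = RInt (fun s => mu * cos (optimal_heading s) - 1) 0 t /\
  ex_RInt (fun s => mu * sin (optimal_heading s)) 0 t /\
  t * (v a * cos a) = RInt (fun s => mu * sin (optimal_heading s)) 0 t.
Proof.
  intros Ht. pose proof (arc_duration_nonneg mu a b HA).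
  assert (Hv : forall s, Rmin 0 t < s < Rmax 0 t ->
            - (v a * sin a) = mu * cos (optimal_heading s) - 1 /\
            v a * cos a = mu * sin (optimal_heading s)).
  { intros s Hs. rewrite Rmin_left, Rmax_right in Hs by lra.
    destruct (optimal_velocity s ltac:(lra)) as [E1 E2].
    rewrite E1, E2, guide_angle_tangent by lra. split; reflexivity. }
  repeat split.
  - apply (ex_RInt_ext_R (fun _ => - (v a * sin a))); [apply Hv | apply ex_RInt_const_R].
  - rewrite <- (RInt_ext_R (fun _ => - (v a * sin a))) by apply Hv.
    rewrite RInt_const_R. ring.
  - apply (ex_RInt_ext_R (fun _ => v a * cos a)); [apply Hv | apply ex_RInt_const_R].
  - rewrite <- (RInt_ext_R (fun _ => v a * cos a)) by apply Hv.
    rewrite RInt_const_R. ring.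
Qed.

Lemma arc_motion_continuous u : continuous (fun u => G (u - t1)) u.
Proof.
  apply (lipschitz_continuous _ 2). intros x y.
  replace (x - y) with ((x - t1) - (y - t1)) by ring. apply arc_angle_lipschitz.
Qed.

Lemma arc_motion_speed_continuous u : continuous (fun u => v (clamp a b (G (u - t1)))) u.
Proof.
  apply (continuous_comp (fun u => G (u - t1)) (fun q => v (clamp a b q))).
  - apply arc_motion_continuous.
  - apply clamped_speed_continuous, HA.
Qed.

Lemma arc_phase_RInt t : t1 <= t <= T_opt ->
  ex_RInt (fun s => mu * cos (optimal_heading s) - 1) t1 t /\
  cos (G (t - t1)) - cos a = RInt (fun s => mu * cos (optimal_heading s) - 1) t1 t /\
  ex_RInt (fun s => mu * sin (optimal_heading s)) t1 t /\
  sin (G (t - t1)) - sin a = RInt (fun s => mu * sin (optimal_heading s)) t1 t.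
Proof.
  intros Ht.
  assert (HG : forall u, is_derive (fun u => G (u - t1)) u (v (clamp a b (G (u - t1)))))
    by (intros u; apply is_derive_shift, arc_angle_derive).
  assert (Hvel : forall s, t1 < s < t ->
            clamp a b (G (s - t1)) = guide_angle s /\ G (s - t1) = guide_angle s).
  { intros s Hs. rewrite guide_angle_arc by lra.
    split; [apply clamp_id; rewrite <- guide_angle_arc by lra; apply guide_angle_range |]; lra. }
  assert (Ga : G (t1 - t1) = a) by (rewrite Rminus_diag; apply arc_angle_start).
  destruct (RInt_derive_ext (fun u => cos (G (u - t1)))
              (fun u => - (v (clamp a b (G (u - t1))) * sin (G (u - t1))))
              (fun s => mu * cos (optimal_heading s) - 1) t1 t) as [Hx Ex];
    [lra | intros u; apply (is_derive_cos_comp (fun u => G (u - t1))), HG | |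
     | rewrite Ga in Ex].
  - intros u. apply (continuous_opp (V := R_NormedModule)).
    apply (continuous_mult (K := R_AbsRing)); [apply arc_motion_speed_continuous |].
    apply (continuous_comp _ sin); [apply arc_motion_continuous | apply continuous_sin].
  - intros s Hs. destruct (Hvel s Hs) as [-> ->].
    destruct (optimal_velocity s ltac:(lra)) as [-> _]. reflexivity.
  - destruct (RInt_derive_ext (fun u => sin (G (u - t1)))
                (fun u => v (clamp a b (G (u - t1))) * cos (G (u - t1)))
                (fun s => mu * sin (optimal_heading s)) t1 t) as [Hy Ey];
      [lra | intros u; apply (is_derive_sin_comp (fun u => G (u - t1))), HG | |
       | rewrite Ga in Ey; repeat split; assumption].
    + intros u. apply (continuous_mult (K := R_AbsRing)); [apply arc_motion_speed_continuous |].
      apply (continuous_comp _ cos); [apply arc_motion_continuous | apply continuous_cos].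
    + intros s Hs. destruct (Hvel s Hs) as [-> ->].
      destruct (optimal_velocity s ltac:(lra)) as [_ ->]. reflexivity.
Qed.

Lemma traj_tangent_phase t : 0 <= t <= t1 ->
  X t = x0 - t * (v a * sin a) /\ Y t = y0 + t * (v a * cos a).
Proof.
  intros Ht. destruct (tangent_phase_RInt t Ht) as [_ [Ex [_ Ey]]].
  unfold traj_x, traj_y. rewrite <- Ex, <- Ey. split; ring.
Qed.

Lemma traj_arc_phase t : t1 <= t <= T_opt -> X t = cos (G (t - t1)) /\ Y t = sin (G (t - t1)).
Proof.
  intros Ht. pose proof tangent_time_pos as Ht1.
  assert (Hv : t1 * v a = L) by (field; pose proof (arc_speed_bounds mu a b HA a ltac:(lra)); nra).
  destruct (tangent_phase_RInt t1 ltac:(lra)) as [Hx1 [Ex1 [Hy1 Ey1]]].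
  destruct (arc_phase_RInt t Ht) as [Hx2 [Ex2 [Hy2 Ey2]]].
  unfold traj_x, traj_y.
  rewrite <- (RInt_Chasles_R _ 0 t1 t), <- Ex1, <- Ex2 by assumption.
  rewrite <- (RInt_Chasles_R _ 0 t1 t), <- Ey1, <- Ey2 by assumption.
  rewrite Hx0, Hy0. split; [transitivity (cos (G (t - t1)) + L * sin a - t1 * v a * sin a)
                         | transitivity (sin (G (t - t1)) - L * cos a + t1 * v a * cos a)];
    try ring; rewrite Hv; ring.
Qed.

Lemma optimal_admissible : admissible mu x0 y0 optimal_heading T_opt.
Proof.
  pose proof tangent_time_pos. pose proof (arc_duration_nonneg mu a b HA).
  destruct (tangent_phase_RInt t1 ltac:(lra)) as [Hx1 [_ [Hy1 _]]].
  destruct (arc_phase_RInt T_opt ltac:(lra)) as [Hx2 [_ [Hy2 _]]].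
  split; [lra |]. split; [apply (ex_RInt_Chasles_R _ 0 t1); assumption |].
  split; [apply (ex_RInt_Chasles_R _ 0 t1); assumption |].
  intros t Ht. unfold rnorm. rewrite <- sqrt_1. apply sqrt_le_1_alt.
  destruct (Rle_dec t t1) as [Hle | Hgt].
  - destruct (traj_tangent_phase t ltac:(lra)) as [-> ->]. rewrite Hx0, Hy0.
    pose proof (sin2_cos2 a). unfold Rsqr in *.
    transitivity ((sin a * sin a + cos a * cos a) * (1 + (L - t * v a) ^ 2)); [| right; ring].
    pose proof (pow2_ge_0 (L - t * v a)). nra.
  - destruct (traj_arc_phase t ltac:(lra)) as [-> ->].
    pose proof (sin2_cos2 (G (t - t1))). unfold Rsqr in *. lra.
Qed.

Lemma optimal_reaches : reaches mu x0 y0 optimal_heading T_opt b.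
Proof.
  pose proof tangent_time_pos. pose proof (arc_duration_nonneg mu a b HA). unfold reaches.
  destruct (traj_arc_phase T_opt ltac:(lra)) as [-> ->].
  replace (T_opt - t1) with (arc_time mu a b b) by ring.
  rewrite arc_angle_end. split; reflexivity.
Qed.

Lemma optimal_tangent_then_arc : tangent_then_arc mu x0 y0 optimal_heading T_opt a b.
Proof.
  pose proof tangent_time_pos. pose proof (arc_duration_nonneg mu a b HA).
  assert (Hva : v a <> 0) by (pose proof (arc_speed_bounds mu a b HA a ltac:(lra)); nra).
  exists t1. split; [lra |]. split.
  { intros t Ht. exists (t / t1). split.
    - split; [apply Rdiv_le_0_compat; lra |].
      apply Rmult_le_reg_r with t1; [lra |]. unfold Rdiv. rewrite Rmult_assoc, Rinv_l; lra.
    - destruct (traj_tangent_phase t Ht) as [-> ->]. rewrite Hx0, Hy0.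
      split; field; split; lra. }
  destruct (traj_arc_phase t1 ltac:(lra)) as [Ex Ey].
  rewrite Rminus_diag, arc_angle_start in Ex, Ey.
  split; [exact Ex |]. split; [exact Ey |].
  exists (fun t => G (t - t1)). split; [| split; [| split]].
  - rewrite Rminus_diag. apply arc_angle_start.
  - replace (T_opt - t1) with (arc_time mu a b b) by ring. apply arc_angle_end.
  - intros t u _ Htu _. apply arc_angle_le. lra.
  - exact traj_arc_phase.
Qed.

End Construction.

Theorem theorem1 (mu x0 y0 theta : R) :
  0 < mu < 1 ->
  1 < rnorm x0 y0 ->
  0 <= y0 ->
  theta_tan x0 y0 <= theta <= PI ->
  (* the target is reachable by some constraint-respecting trajectory *)
  (exists psi T, admissible mu x0 y0 psi T /\ reaches mu x0 y0 psi T theta) ->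
  exists psi_opt T_opt,
    admissible mu x0 y0 psi_opt T_opt /\
    reaches mu x0 y0 psi_opt T_opt theta /\
    tangent_then_arc mu x0 y0 psi_opt T_opt (theta_tan x0 y0) theta /\
    (forall psi T, admissible mu x0 y0 psi T -> reaches mu x0 y0 psi T theta ->
       T_opt <= T).
Proof.
  intros Hmu Hr Hy [Hth Hth'] [psi [T [Hadm Hreach]]].
  destruct (tangent_point x0 y0 Hr Hy) as [Ha [HL [Hx0 Hy0]]].
  set (a := theta_tan x0 y0) in *. set (L := sqrt (rnorm x0 y0 ^ 2 - 1)) in *.
  pose proof (cos_target_ge mu x0 y0 psi T Hmu Hadm theta Hreach Hr) as Hcb.
  assert (Hb : theta < PI).
  { destruct (Req_dec theta PI) as [E | E]; [rewrite E, cos_PI in Hcb |]; lra. }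
  pose proof (cos_tangent_le mu x0 y0 psi T a theta L Hmu Hadm Hreach Ha Hth Hb HL Hx0 Hy0) as Hca.
  assert (HA : followable_arc mu a theta) by (repeat split; lra).
  exists (optimal_heading mu a theta L HA), (L / arc_speed mu a + arc_time mu a theta theta).
  split; [apply optimal_admissible; assumption |].
  split; [apply optimal_reaches; assumption |].
  split; [apply optimal_tangent_then_arc; assumption |].
  intros psi' T' Hadm' Hreach'.
  exact (arc_lower_bound mu x0 y0 psi' T' a theta L Hmu Hadm' Hreach' Ha Hth Hb HL Hx0 Hy0 HA).
Qed.
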